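(* Let $t$ be a positive integer and let $M$ be a $t$-spike with associated partition $(A_1,\ldots,A_r)$. Then, for every partition $(J,K)$ of $\{1,\dots,r\}$ with $|J| \le |K|$, $$\lambda\left(\bigcup_{j \in J} A_j\right) = \begin{cases} 2|J| & \text{if } |J| < t,\\ 2t-2 & \text{if } |J| \ge t.\end{cases}$$
   Context: For a positive integer $t$, a matroid $M$ is a $t$-spike of order $r$ (where $r\ge t$) if there is a partition $(A_1,\ldots,A_r)$ of $E(M)$ into 2-element sets, called the associated partition, such that, for every $t$-element subset $J\subseteq\{1,\dots,r\}$, the set $\bigcup_{j\in J}A_j$ is both a circuit and a cocircuit of $M$. The connectivity function of a matroid $M$ with ground set $E$ is $\lambda(X) = r(X) + r(E-X) - r(M)$ for $X\subseteq E$. *)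

From mathcomp Require Import all_boot.
Set Implicit Arguments. Unset Strict Implicit. Unset Printing Implicit Defensive.

(* A matroid on the finite ground set [T] (E(M) = all of T), given by its rank
   function satisfying the standard rank axioms (R1)-(R3). *)
Record matroid (T : finType) := Matroid {
  rk : {set T} -> nat;
  rk_bound : forall X : {set T}, rk X <= #|X|;
  rk_mono : forall X Y : {set T}, X \subset Y -> rk X <= rk Y;
  rk_submod : forall X Y : {set T}, rk (X :|: Y) + rk (X :&: Y) <= rk X + rk Y
}.

Section MatroidDefs.
Variables (T : finType) (M : matroid T).

Definition dependent (X : {set T}) : bool := rk M X < #|X|.

Definition circuit (C : {set T}) : bool :=
  dependent C && [forall D : {set T}, (D \proper C) ==> ~~ dependent D].

(* codependent set: dependent in the dual matroid, i.e. r(E - X) < r(E) *)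
Definition codependent (X : {set T}) : bool := rk M (~: X) < rk M setT.

Definition cocircuit (C : {set T}) : bool :=
  codependent C && [forall D : {set T}, (D \proper C) ==> ~~ codependent D].

Definition conn (X : {set T}) : nat := rk M X + rk M (~: X) - rk M setT.

End MatroidDefs.

Definition is_spike (T : finType) (M : matroid T) (t r : nat)
    (A : 'I_r -> {set T}) : Prop :=
  [/\ t <= r,
      (forall i, #|A i| = 2),
      (forall i j, i != j -> [disjoint A i & A j]),
      (\bigcup_(i < r) A i = setT) &
      (forall J : {set 'I_r}, #|J| = t ->
         circuit M (\bigcup_(j in J) A j) /\ cocircuit M (\bigcup_(j in J) A j))].
Arguments is_spike {T} M t r A.

From mathcomp Require Import all_boot.
From mathcomp Require Import zify.

Set Implicit Arguments. Unset Strict Implicit. Unset Printing Implicit Defensive.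

(* Write X(J) for the union of the blocks indexed by J. Every set of fewer
   than t indices extends to a t-set, so for |J| < t the set X(J) is a proper
   subset of both a circuit and a cocircuit: it is independent and
   coindependent, whence lambda(X(J)) = 2|J|.  For |L| >= t, a circuit through
   t-1 blocks of L and one new block shows that adding a block raises the rank
   by at most one, while a cocircuit through t-1 blocks outside L shows that it
   raises the rank by at least one; hence r(X(L)) = |L| + t - 1 as long as
   t - 1 blocks lie outside L.  Applied to the complement of a coindependent
   union of t - 1 blocks this gives r(M) = r once r >= 2t - 1, and for
   |J|, |K| >= t the three ranks combine to lambda(X(J)) = 2t - 2. *)

Lemma exists_subset_card (U : finType) (B : {set U}) n :
  n <= #|B| -> exists2 C : {set U}, C \subset B & #|C| = n.
Proof.
move=> le_nB; exists [set x in take n (enum B)].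
  by apply/subsetP=> x; rewrite inE => /mem_take; rewrite mem_enum.
by rewrite cardsE (card_uniqP _) ?take_uniq ?enum_uniq // size_takel // -cardE.
Qed.

Lemma exists_superset_card (U : finType) (J : {set U}) n :
  #|J| <= n <= #|U| -> exists2 L : {set U}, J \subset L & #|L| = n.
Proof.
case/andP=> leJn lenU.
have [C subCJ cardC] : exists2 C : {set U}, C \subset ~: J & #|C| = n - #|J|.
  by apply: exists_subset_card; have := cardsC J; lia.
exists (J :|: C); first exact: subsetUl.
rewrite cardsU cardC; move: subCJ; rewrite -disjoints_subset disjoint_sym -setI_eq0 => /eqP->.
by rewrite cards0; lia.
Qed.

Lemma card_bigcup_disjoint (I U : finType) (J : {set I}) (F : I -> {set U}) :
  (forall i j, i != j -> [disjoint F i & F j]) ->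
  #|\bigcup_(j in J) F j| = \sum_(j in J) #|F j|.
Proof.
move=> disjF; pose G i := if i \in J then F i else set0.
have disjG i j : i != j -> [disjoint G i & G j].
  by move=> ne; rewrite /G -setI_eq0; do 2 case: ifP => _; rewrite ?setI0 ?set0I ?setI_eq0 ?disjF.
have -> : \bigcup_(j in J) F j = \bigcup_j G j by rewrite big_mkcond.
rewrite -sum1_card (partition_disjoint_bigcup _ _ disjG).
by rewrite [RHS]big_mkcond; apply: eq_bigr => i _; rewrite sum1_card /G; case: ifP; rewrite ?cards0.
Qed.

Section MatroidRank.
Variables (T : finType) (M : matroid T).
Local Notation rk := (rk M).

Lemma rk_setU1 (a : T) (S : {set T}) : rk (a |: S) <= (rk S).+1.
Proof.
have := rk_submod M [set a] S; have := rk_bound M [set a]; rewrite cards1; lia.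
Qed.

Lemma circuit_rk_proper (C D : {set T}) : circuit M C -> D \proper C -> rk D = #|D|.
Proof.
case/andP=> _ /forallP/(_ D) minC ltDC; move: minC; rewrite ltDC /= /dependent -leqNgt.
by move=> leDrk; apply/eqP; rewrite eqn_leq rk_bound.
Qed.

Lemma circuit_rk (C : {set T}) : circuit M C -> rk C = #|C|.-1.
Proof.
move=> circC; have /andP[depC _] := circC; rewrite /dependent in depC.
have /set0Pn[x xC] : C != set0 by rewrite -card_gt0; lia.
have := circuit_rk_proper circC (properD1 xC).
have := rk_mono M (subsetDl C [set x]); have := cardsD1 x C; rewrite xC; lia.
Qed.

Lemma rk_setU1_circuit (C S : {set T}) (b : T) :
  circuit M C -> b \in C -> C :\ b \subset S -> rk (b |: S) = rk S.
Proof.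
move=> circC bC subCS; apply/eqP; rewrite eqn_leq [rk S <= _]rk_mono ?subsetUr // andbT.
have le_bS_SC : rk (b |: S) <= rk (S :|: C).
  by rewrite rk_mono // subUset sub1set inE bC orbT subsetUl.
have le_Cb_SC : rk (C :\ b) <= rk (S :&: C) by rewrite rk_mono // subsetI subCS subsetDl.
have := rk_submod M S C; have := circuit_rk_proper circC (properD1 bC).
have := circuit_rk circC; have := cardsD1 b C; rewrite bC; lia.
Qed.

Lemma cocircuit_rkC_proper (D D' : {set T}) :
  cocircuit M D -> D' \proper D -> rk (~: D') = rk setT.
Proof.
case/andP=> _ /forallP/(_ D') minD ltD'D; move: minD; rewrite ltD'D /= /codependent -leqNgt.
by move=> le_T_D'; apply/eqP; rewrite eqn_leq le_T_D' rk_mono ?subsetT.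
Qed.

Lemma rk_setU1_cocircuit (D S : {set T}) (b : T) :
  cocircuit M D -> b \in D -> S \subset ~: D -> rk S < rk (b |: S).
Proof.
move=> cocircD bD subSD; have /andP[codepD _] := cocircD; rewrite /codependent in codepD.
have le_Db_union : rk (~: (D :\ b)) <= rk ((b |: S) :|: ~: D).
  by apply: rk_mono; apply/subsetP=> x; rewrite !inE negb_and negbK; case/orP=> ->; rewrite ?orbT.
have le_S_inter : rk S <= rk ((b |: S) :&: ~: D).
  by rewrite rk_mono // subsetI subSD subsetUr.
have := rk_submod M (b |: S) (~: D); have := cocircuit_rkC_proper cocircD (properD1 bD).
lia.
Qed.

End MatroidRank.

Section Spike.
Variables (T : finType) (M : matroid T) (t r : nat) (A : 'I_r -> {set T}).
Hypotheses (t_gt0 : 0 < t) (spikeM : is_spike M t r A).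
Local Notation rk := (rk M).
Local Notation X J := (\bigcup_(j in J) A j).

Let t_le_r : t <= r. Proof. by case: spikeM. Qed.
Let card_block i : #|A i| = 2. Proof. by case: spikeM => _ /(_ i). Qed.
Let disjoint_blocks i j : i != j -> [disjoint A i & A j].
Proof. by case: spikeM => _ _ /(_ i j). Qed.
Let cover_blocks : \bigcup_(i < r) A i = setT. Proof. by case: spikeM. Qed.
Let spike_circuit (J : {set 'I_r}) : #|J| = t -> circuit M (X J).
Proof. by case: spikeM => _ _ _ _ cc /cc[]. Qed.
Let spike_cocircuit (J : {set 'I_r}) : #|J| = t -> cocircuit M (X J).
Proof. by case: spikeM => _ _ _ _ cc /cc[]. Qed.

Lemma mem_blocks x i (J : {set 'I_r}) : x \in A i -> (x \in X J) = (i \in J).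
Proof.
move=> xAi; apply/bigcupP/idP=> [[j jJ xAj] | iJ]; last by exists i.
by case: (eqVneq i j) => [-> // | neij]; rewrite (disjointFr (disjoint_blocks neij) xAi) in xAj.
Qed.

Lemma card_blocks (J : {set 'I_r}) : #|X J| = 2 * #|J|.
Proof.
by rewrite card_bigcup_disjoint // (eq_bigr (fun=> 2)) // sum_nat_const mulnC.
Qed.

Lemma setC_blocks (J : {set 'I_r}) : ~: X J = X (~: J).
Proof.
apply/setP=> x; have /bigcupP[i _ xAi] : x \in \bigcup_(i < r) A i by rewrite cover_blocks inE.
by rewrite inE !(mem_blocks _ xAi) inE.
Qed.

Lemma subset_blocks (J L : {set 'I_r}) : J \subset L -> X J \subset X L.
Proof. by move=> subJL; apply/bigcupsP=> i iJ; rewrite (bigcup_max i) ?(subsetP subJL). Qed.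

Lemma proper_blocks (J L : {set 'I_r}) : J \proper L -> X J \proper X L.
Proof.
by rewrite !properEcard !card_blocks ltn_mul2l /= => /andP[/subset_blocks -> ->].
Qed.

Lemma exists_spike_superset (J : {set 'I_r}) :
  #|J| < t -> exists2 L : {set 'I_r}, J \proper L & #|L| = t.
Proof.
move=> ltJt; have [L subJL cardL] : exists2 L : {set 'I_r}, J \subset L & #|L| = t.
  by apply: exists_superset_card; rewrite card_ord ltnW.
by exists L; rewrite // properEcard subJL cardL.
Qed.

Lemma spike_rk_small (J : {set 'I_r}) : #|J| < t -> rk (X J) = 2 * #|J|.
Proof.
case/exists_spike_superset=> L /proper_blocks ltJL /spike_circuit circL.
by rewrite (circuit_rk_proper circL ltJL) card_blocks.
Qed.

Lemma spike_rkC_small (J : {set 'I_r}) : #|J| < t -> rk (~: X J) = rk setT.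
Proof.
case/exists_spike_superset=> L /proper_blocks ltJL /spike_cocircuit cocircL.
exact: cocircuit_rkC_proper cocircL ltJL.
Qed.

Lemma spike_rk_add_block k (J : {set 'I_r}) :
  k \notin J -> t.-1 <= #|J| -> rk (X (k |: J)) <= (rk (X J)).+1.
Proof.
move=> kJ /exists_subset_card[L0 subL0J cardL0].
have kL0 : k \notin L0 := contra (subsetP subL0J k) kJ.
have /spike_circuit circ : #|k |: L0| = t by rewrite cardsU1 kL0 cardL0; lia.
have /cards2P[a [b [_ Ak]]] : #|A k| == 2 by rewrite card_block.
have aAk : a \in A k by rewrite Ak !inE eqxx.
have subC : X (k |: L0) :\ a \subset b |: X J.
  apply/subsetP=> x /setD1P[xa /bigcupP[i /setU1P[-> | iL0] xAi]].
    by move: xAi; rewrite Ak !inE (negbTE xa) /= => ->.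
  by rewrite !inE (mem_blocks _ xAi) (subsetP subL0J) ?orbT.
rewrite big_setU1 //= Ak -setUA (rk_setU1_circuit circ _ subC) ?rk_setU1 //.
by rewrite (mem_blocks _ aAk) setU11.
Qed.

Lemma spike_rk_del_block k (L : {set 'I_r}) :
  k \in L -> t.-1 <= #|~: L| -> (rk (X (L :\ k))).+1 <= rk (X L).
Proof.
move=> kL /exists_subset_card[L1 subL1L cardL1].
have kL1 : k \notin L1 by apply: contraL kL => /(subsetP subL1L); rewrite inE.
have /spike_cocircuit cocirc : #|k |: L1| = t by rewrite cardsU1 kL1 cardL1; lia.
have /cards2P[a [b [_ Ak]]] : #|A k| == 2 by rewrite card_block.
have bAk : b \in A k by rewrite Ak !inE eqxx orbT.
have subSD : X (L :\ k) \subset ~: X (k |: L1).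
  apply/subsetP=> x /bigcupP[i /setD1P[ik iL] xAi].
  rewrite inE (mem_blocks _ xAi) !inE (negbTE ik) /=.
  by apply: contraL iL => /(subsetP subL1L); rewrite inE.
have bD : b \in X (k |: L1) by rewrite (mem_blocks _ bAk) setU11.
have := rk_setU1_cocircuit cocirc bD subSD.
suff : rk (b |: X (L :\ k)) <= rk (X L) by lia.
by rewrite rk_mono // subUset sub1set (mem_blocks _ bAk) kL subset_blocks ?subD1set.
Qed.

Lemma spike_rk_large (L : {set 'I_r}) :
  t <= #|L| -> t.-1 <= #|~: L| -> rk (X L) = #|L| + t.-1.
Proof.
have [n] := ubnP #|L|; elim: n L => // n IH L /ltnSE leLn.
rewrite leq_eqVlt => /predU1P[eqtL _ | ltL leLC].
  by rewrite (circuit_rk (spike_circuit (esym eqtL))) card_blocks -eqtL; lia.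
have /set0Pn[k kL] : L != set0 by rewrite -card_gt0; lia.
have cardLk : #|L| = #|L :\ k|.+1 by rewrite (cardsD1 k L) kL.
have cardLkC : #|~: (L :\ k)| = #|~: L|.+1.
  by have := cardsC L; have := cardsC (L :\ k); lia.
have := IH (L :\ k); have := spike_rk_del_block kL leLC.
have := @spike_rk_add_block k (L :\ k); rewrite setD11 setD1K //; lia.
Qed.

Lemma spike_rk_setT : t + t.-1 <= r -> rk setT = r.
Proof.
move=> le_r; have [S _ cardS] : exists2 S : {set 'I_r}, S \subset setT & #|S| = t.-1.
  by apply: exists_subset_card; rewrite cardsT card_ord; lia.
have := cardsC S; rewrite card_ord => cardSC.
rewrite -(@spike_rkC_small S); last by lia.
by rewrite setC_blocks spike_rk_large ?setCK; lia.
Qed.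

End Spike.

Theorem lemma6p4 (T : finType) (M : matroid T) (t r : nat)
    (A : 'I_r -> {set T}) :
  0 < t -> is_spike M t r A ->
  forall J K : {set 'I_r}, J :&: K = set0 -> J :|: K = setT -> #|J| <= #|K| ->
  conn M (\bigcup_(j in J) A j) = (if #|J| < t then 2 * #|J| else 2 * t - 2).
Proof.
move=> t_gt0 spikeM J K disjJK coverJK leJK.
have eqK : K = ~: J.
  apply/setP=> i; move/setP/(_ i): disjJK; move/setP/(_ i): coverJK.
  by rewrite !inE; case: (i \in J); case: (i \in K).
rewrite {K disjJK coverJK}eqK in leJK.
have := cardsC J; rewrite card_ord /conn => cardJC.
case: ltnP => [ltJt | leJt].
  by rewrite (spike_rk_small spikeM) ?(spike_rkC_small spikeM) //; lia.
rewrite (setC_blocks spikeM) !(spike_rk_large t_gt0 spikeM) ?setCK ?(spike_rk_setT t_gt0 spikeM);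
  lia.
Qed.
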